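(* Let $\Bbbk$ be an algebraically closed field of characteristic zero, $G$ a finite group, $\chi:G\to\Bbbk^\times$ a linear character, $g\in Z(G)$, $n\geq2$ the multiplicative order of $\chi(g)$, and $H$ the $\Bbbk$-algebra generated by $\Bbbk G$ and $z$ with relations $z^n=0$, $zs=\chi(s)sz$ ($s\in G$). Suppose $$\Big(\sum_{j=1}^t z^{l_j}\sum_{i=0}^{p-1}\alpha_i^{(j)}e_i\Big)=\Big(\sum_{s=1}^r z^{m_s}\sum_{i=0}^{p-1}\beta_i^{(s)}e_i\Big),$$ where $n-1\geq l_1>\cdots>l_t\geq0$, $n-1\geq m_1>\cdots>m_r\geq0$, all $\alpha_i^{(j)},\beta_i^{(s)}\in\{0,1\}$, $\sum_i\alpha_i^{(t)}\neq0$ and $\sum_i\beta_i^{(r)}\neq0$. Then $l_t=m_r$ and $\alpha_i^{(t)}=\beta_i^{(r)}$ for $0\leq i\leq p-1$.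
   Context: $\chi_0,\dots,\chi_{p-1}$ are the irreducible characters of $G$ and $e_i=\frac{\chi_i(1)}{|G|}\sum_{h\in G}\chi_i(h)h^{-1}$ the primitive central idempotents of $\Bbbk G$. $(a)$ denotes the two-sided ideal of $H$ generated by $a$. *)

From HB Require Import structures.
From mathcomp Require Import all_boot all_order all_algebra all_fingroup all_solvable all_field all_character.
Set Implicit Arguments. Unset Strict Implicit. Unset Printing Implicit Defensive.
Import Order.TTheory GRing.Theory Num.Theory.
Local Open Scope ring_scope.

Section Defs.
Variables (k : fieldType) (gT : finGroupType).

Definition is_irr_char (phi : gT -> k) : Prop :=
  exists m (rG : mx_representation k [set: gT]%G m),
    mx_irreducible rG /\ forall x, phi x = \tr (rG x).

Definition irr_enum (p : nat) (chi_ : 'I_p -> gT -> k) : Prop :=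
  (forall i, is_irr_char (chi_ i)) /\
  (forall i j, (forall x, chi_ i x = chi_ j x) -> i = j) /\
  (forall phi, is_irr_char phi -> exists i, forall x, phi x = chi_ i x).

Definition kG := {ffun gT -> k}.

(* e_phi = phi(1)/|G| * sum_h phi(h) h^{-1}; its coefficient at x is
   phi(1)/|G| * phi(x^{-1}). *)
Definition cidem (phi : gT -> k) : kG :=
  [ffun x => phi 1%g / (#|gT|%:R) * phi (x^-1)%g].

(* The algebra H = k<kG, z | z^n = 0, z s = chi(s) s z>, realized on its
   basis { z^a h : 0 <= a < n, h in G }: an element is its coefficient
   function on pairs (a, h). *)
Variables (n : nat) (chi : gT -> k).

Definition Halg := {ffun 'I_n * gT -> k}.

(* (z^a s)(z^b t) = chi(s)^{-b} z^{a+b} (s t), which is 0 when a + b >= n *)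
Definition basis_prod (p q : 'I_n * gT) : Halg :=
  [ffun r : 'I_n * gT =>
     if ((r.1 : nat) == (p.1 + q.1)%N) && (r.2 == (p.2 * q.2)%g)
     then (chi p.2) ^- q.1 else 0].

Definition mulH (x y : Halg) : Halg :=
  [ffun r => \sum_(p : 'I_n * gT) \sum_(q : 'I_n * gT) x p * y q * basis_prod p q r].

Definition zpow (l : nat) : Halg :=
  [ffun r : 'I_n * gT => ((((r.1 : nat) == l) && (r.2 == 1%g)) : bool)%:R].

Definition kG_emb (e : kG) : Halg :=
  [ffun r : 'I_n * gT => if (r.1 : nat) == 0%N then e r.2 else 0].

Definition in_ideal (a x : Halg) : Prop :=
  exists s : seq (Halg * Halg), x = \sum_(uv <- s) mulH (mulH uv.1 a) uv.2.

Definition same_ideal (a b : Halg) : Prop :=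
  forall x, in_ideal a x <-> in_ideal b x.

Definition zsum (p : nat) (e : 'I_p -> kG) (t : nat) (l : nat -> nat)
    (alpha : nat -> 'I_p -> k) : Halg :=
  \sum_(1 <= j < t.+1)
     mulH (zpow (l j)) (kG_emb [ffun x => \sum_(i < p) alpha j i * e i x]).

End Defs.

From HB Require Import structures.
From mathcomp Require Import all_boot all_order all_algebra all_fingroup.
From mathcomp Require Import all_solvable all_field all_character ring zify.
Import Order.TTheory GRing.Theory Num.Theory.
Local Open Scope ring_scope.
Set Implicit Arguments. Unset Strict Implicit. Unset Printing Implicit Defensive.

(* Fix an irreducible representation rho of G, with character chi_i.  For x in
   z^m H let L_m(x) be rho applied to the z^m-coefficient of x.  As
   z^m s = chi(s)^-m s z^m, L_m(u x v) = rho'(u_0) L_m(x) rho(v_0), with rho'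
   the twist of rho by chi^-m, so L_m sends the ideal generated by an element
   of z^m H into the matrix ideal generated by its image.  The generator
   sum_j z^(l_j) sum_i alpha_i^(j) e_i lies in z^(l_t) H, and since e_i acts on
   rho as the identity and every other e_j as 0, its image under L_(l_t) is
   alpha_i^(t) times the identity.  Comparing both generators of the same ideal
   gives l_t = m_r and alpha_i^(t) <> 0 <-> beta_i^(r) <> 0, which for 0/1
   coefficients is equality. *)

Definition kG_mx (F : fieldType) (gT : finGroupType) d (rho : gT -> 'M[F]_d)
    (E : kG F gT) : 'M[F]_d :=
  \sum_(h : gT) E h *: rho h.

Lemma scalemx1_inj (F : fieldType) d : (0 < d)%N ->
  injective (fun a : F => a *: (1%:M : 'M[F]_d)).
Proof.
move=> d_gt0 a b /matrixP/(_ (Ordinal d_gt0) (Ordinal d_gt0)).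
by rewrite !mxE eqxx !mulr1.
Qed.

Lemma scalemx1_eq0 (F : fieldType) d (a : F) : (0 < d)%N ->
  a *: (1%:M : 'M[F]_d) = 0 -> a = 0.
Proof.
move=> d_gt0 /matrixP/(_ (Ordinal d_gt0) (Ordinal d_gt0)).
by rewrite !mxE eqxx mulr1.
Qed.

Lemma kG_mx_sum (F : fieldType) (gT : finGroupType) d (rho : gT -> 'M[F]_d)
    p (c : 'I_p -> F) (e : 'I_p -> kG F gT) :
  kG_mx rho [ffun x => \sum_(i < p) c i * e i x] = \sum_(i < p) c i *: kG_mx rho (e i).
Proof.
rewrite /kG_mx; under eq_bigr => h _ do rewrite ffunE scaler_suml.
rewrite exchange_big; apply: eq_bigr => i _.
by rewrite scaler_sumr; apply: eq_bigr => h _; rewrite scalerA.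
Qed.

Section RegularRepr.
Variables (F : fieldType) (gT : finGroupType).
Local Notation G := [set: gT]%G.
Local Notation aG := (regular_repr F G).

Lemma mxtrace_regular_repr x : \tr (aG x) = (#|gT| * (x == 1%g))%:R.
Proof.
rewrite /mxtrace; have [->|nx1] := eqVneq x 1%g.
  rewrite muln1 (eq_bigr (fun _ => 1)) => [|i _].
    by rewrite sumr_const card_ord; congr _%:R; exact: cardsT.
  by rewrite /= /regular_mx mxE mulg1 gring_valK mxE !eqxx.
rewrite muln0 big1 // => i _; rewrite /= /regular_mx !mxE /=.
case: eqP => // /(congr1 (@enum_val _ (pred_of_set G))).
rewrite gring_indexK ?in_setT // => /eqP.
by rewrite -{1}[enum_val i]mulg1 (inj_eq (mulgI _)) eq_sym (negbTE nx1).
Qed.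

Lemma mxtrace_kG_mx_regular (E : kG F gT) y :
  \tr (kG_mx aG E *m aG y) = #|gT|%:R * E y^-1%g.
Proof.
rewrite mulmx_suml raddf_sum (bigD1 y^-1%g) //= big1 => [|x nxy].
  rewrite -scalemxAl -repr_mxM ?in_setT // mxtraceZ mulVg mxtrace_regular_repr.
  by rewrite eqxx muln1 addr0 mulrC.
rewrite -scalemxAl -repr_mxM ?in_setT // mxtraceZ mxtrace_regular_repr.
by rewrite -[y]invgK -eq_mulgV1 (negbTE nxy) muln0 mulr0.
Qed.

Lemma gring_op_kG_mx d (rG : mx_representation F G d) (E : kG F gT) :
  gring_op rG (kG_mx aG E) = kG_mx rG E.
Proof.
rewrite linear_sum; apply: eq_bigr => x _.
by rewrite linearZ /= gring_opG ?in_setT.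
Qed.

Lemma group_ring_kG_mx A : (A \in group_ring F G)%MS -> exists E, A = kG_mx aG E.
Proof.
case/envelop_mxP=> a ->; exists [ffun x => a x].
by apply: eq_big => [x|x _]; rewrite ?in_setT ?ffunE.
Qed.

End RegularRepr.

Section CentralIdempotents.
Variables (F : closedFieldType) (gT : finGroupType).
Hypothesis F_char0 : [pchar F] =i pred0.
Local Notation G := [set: gT]%G.
Local Notation aG := (regular_repr F G).

Let pchar'G : ([pchar F]^'.-group G)%g.
Proof. by rewrite /pgroup pcharf'_nat (pcharf0P _).1 // -lt0n cardG_gt0. Qed.

Let sG := DecSocleType aG.

Let Wedderburn_id_group_ring (W : sG) : (Wedderburn_id W \in group_ring F G)%MS.
Proof.
by rewrite -(Wedderburn_sum_pchar sG pchar'G) (sumsmx_sup W) ?Wedderburn_id_mem.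
Qed.

Lemma mxtrace_group_ring A : (A \in group_ring F G)%MS ->
  \tr A = \sum_(W : sG) \tr (gring_op (irr_repr W) A) *+ irr_degree W.
Proof.
have splitG := @group_closure_closed_field F gT G.
case/group_ring_kG_mx=> E ->; rewrite raddf_sum /=.
under eq_bigr => y _ do
  rewrite mxtraceZ (mxtrace_regular_pchar sG pchar'G splitG (in_setT y)) mulr_sumr.
rewrite exchange_big; apply: eq_bigr => W _.
rewrite gring_op_kG_mx raddf_sum -sumrMnl /=; apply: eq_bigr => y _.
by rewrite mxtraceZ mulrnAr.
Qed.

Lemma mxtrace_Wedderburn_id_regular (W : sG) y :
  \tr (Wedderburn_id W *m aG y) = \tr (irr_repr W y) *+ irr_degree W.
Proof.
rewrite mxtrace_group_ring ?envelop_mxM ?envelop_mx_id ?in_setT //.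
rewrite (bigD1 W) //= big1 ?addr0 => [|W']; rewrite gring_opM ?envelop_mx_id ?in_setT //.
  by rewrite op_Wedderburn_id_pchar // gring_opG ?in_setT // mul1mx.
rewrite eq_sym => nWW'.
by rewrite (irr_repr'_op0_pchar pchar'G nWW' (Wedderburn_id_mem W)) mul0mx mxtrace0 mul0rn.
Qed.

Lemma Wedderburn_id_cidem (W : sG) :
  Wedderburn_id W = kG_mx aG (cidem (fun x => \tr (irr_repr W x))).
Proof.
have [E defE] := group_ring_kG_mx (Wedderburn_id_group_ring W).
rewrite defE; congr kG_mx; apply/ffunP => x.
have G_neq0 : (#|gT|%:R : F) != 0.
  by rewrite (pcharf0P _).1 // -lt0n; apply/card_gt0P; exists 1%g.
(* Both sides times |G| are the trace of (Wedderburn_id W) (aG x^-1). *)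
apply: (mulfI G_neq0); rewrite ffunE repr_mx1 mxtrace1 mulrA mulrCA mulfV // mulr1.
by rewrite -{1}[x]invgK -mxtrace_kG_mx_regular -defE mxtrace_Wedderburn_id_regular mulr_natl.
Qed.

Lemma kG_mx_cidem (W W' : sG) :
  kG_mx (irr_repr W') (cidem (fun x => \tr (irr_repr W x))) = (W == W')%:R *: 1%:M.
Proof.
rewrite -gring_op_kG_mx -Wedderburn_id_cidem.
have [<-|nW] := eqVneq W W'; first by rewrite op_Wedderburn_id_pchar // scale1r.
by rewrite (irr_repr'_op0_pchar pchar'G nW (Wedderburn_id_mem W)) scale0r.
Qed.

Variables (p : nat) (chi_ : 'I_p -> gT -> F).
Hypothesis chi_irr : irr_enum chi_.

Lemma irr_enum_socle i : exists W : sG, forall x, chi_ i x = \tr (irr_repr W x).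
Proof.
have [m [rG [irrG chiE]]] := chi_irr.1 i.
exists (irr_comp sG rG) => x.
by rewrite chiE (mxtrace_rsim (rsim_irr_comp_pchar sG pchar'G irrG) (in_setT x)).
Qed.

Lemma kG_mx_cidem_enum j (W : sG) : (forall x, chi_ j x = \tr (irr_repr W x)) ->
  forall i, kG_mx (irr_repr W) (cidem (chi_ i)) = (i == j)%:R *: 1%:M.
Proof.
move=> chi_jE i; have [Wi chi_iE] := irr_enum_socle i.
have -> : cidem (chi_ i) = cidem (fun x => \tr (irr_repr Wi x)).
  by apply/ffunP => x; rewrite !ffunE !chi_iE.
rewrite kG_mx_cidem; congr ((nat_of_bool _)%:R *: _); apply/idP/idP => /eqP eqij; apply/eqP.
  by apply: chi_irr.2.1 => x; rewrite chi_iE chi_jE eqij.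
have eq_cidem : cidem (fun x => \tr (irr_repr Wi x)) = cidem (fun x => \tr (irr_repr W x)).
  by apply/ffunP => x; rewrite !ffunE -!chi_iE eqij !chi_jE.
have [//|nWiW] := eqVneq Wi W.
have := kG_mx_cidem Wi W; rewrite eq_cidem kG_mx_cidem eqxx (negbTE nWiW) /=.
by move/(scalemx1_inj (irr_degree_gt0 W))/eqP; rewrite mulr1n mulr0n oner_eq0.
Qed.

End CentralIdempotents.

Lemma decreasing_ltn t (l : nat -> nat) :
  (forall j, (1 <= j < t)%N -> (l j.+1 < l j)%N) ->
  forall i j, (1 <= i)%N -> (i < j <= t)%N -> (l j < l i)%N.
Proof.
move=> l_decr i j i_ge1 /andP[lt_ij j_le].
apply: (@homo_ltn_in nat [pred s | 1 <= s <= t]%N l (fun a b => b < a)%N) => //.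
- by move=> y x z lt_yx lt_zy; apply: ltn_trans lt_zy lt_yx.
- move=> a b; rewrite !inE => /andP[a_ge1 _] /andP[_ b_le] s /andP[lt_as lt_sb].
  by rewrite inE; lia.
- by move=> a; rewrite !inE => /andP[a_ge1 _] /andP[_ lt_at]; apply: l_decr; rewrite a_ge1.
- by rewrite inE i_ge1; lia.
- by rewrite inE j_le; lia.
Qed.

Lemma decreasing_bounds t (l : nat -> nat) n : (l 1 < n)%N ->
  (forall j, (1 <= j < t)%N -> (l j.+1 < l j)%N) ->
  forall j, (1 <= j <= t)%N -> (l t <= l j)%N /\ (l j < n)%N.
Proof.
move=> l1_lt l_decr j /andP[j_ge1 j_le]; split.
  case: (ltngtP j t) j_le => [lt_jt _|//|-> //].
  by apply/ltnW/(decreasing_ltn l_decr j_ge1); rewrite lt_jt leqnn.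
case: (ltngtP 1 j) j_ge1 => [lt_1j _|//|<- //].
by apply/(leq_trans _ l1_lt)/ltnW/(decreasing_ltn l_decr (leqnn 1)); rewrite lt_1j.
Qed.

Section ZLayer.
Variables (k : fieldType) (gT : finGroupType) (n : nat) (chi : gT -> k).
Variables (d : nat) (rho : mx_representation k [set: gT]%G d).
Local Notation H := (Halg k gT n).
Local Notation mul := (mulH chi).
Local Notation zpow := (zpow k gT n).

Definition zdeg_ge m (x : H) : bool :=
  [forall q : 'I_n * gT, (q.1 < m)%N ==> (x q == 0)].

Lemma zdeg_geP m (x : H) :
  reflect (forall q : 'I_n * gT, (q.1 < m)%N -> x q = 0) (zdeg_ge m x).
Proof.
apply: (iffP forallP) => [xm q /(implyP (xm q))/eqP //|xm q].
by apply/implyP => /xm->.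
Qed.

(* L_m of the header, with each group element h of the z^m-coefficient weighted
   by c h; the weight chi^-m appears when z^m is moved past a left factor. *)
Definition zlayer_mx (c : gT -> k) m (x : H) : 'M[k]_d :=
  \sum_(q : 'I_n * gT) ((((q.1 : nat) == m)%:R * c q.2 * x q) *: rho q.2).
Local Notation zlayer := (zlayer_mx (fun _ => 1)).

Lemma zdeg_geW m m' x : (m <= m')%N -> zdeg_ge m' x -> zdeg_ge m x.
Proof.
move=> le_mm' /zdeg_geP xm'; apply/zdeg_geP => q lt_qm.
by apply: xm'; apply: leq_trans le_mm'.
Qed.

Lemma zdeg_ge_sum m (I : Type) (r : seq I) (P : pred I) (F : I -> H) :
  (forall i, P i -> zdeg_ge m (F i)) -> zdeg_ge m (\sum_(i <- r | P i) F i).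
Proof.
move=> Fm; apply/zdeg_geP => q lt_qm.
by rewrite sum_ffunE big1 // => i /Fm/zdeg_geP->.
Qed.

Lemma zdeg_ge_zpow l : zdeg_ge l (zpow l).
Proof. by apply/zdeg_geP => q lt_ql; rewrite ffunE (ltn_eqF lt_ql). Qed.

Lemma basis_prod_eq0 (p q r : 'I_n * gT) :
  (r.1 : nat) != (p.1 + q.1)%N -> basis_prod chi p q r = 0.
Proof. by move=> ne_r; rewrite ffunE (negbTE ne_r). Qed.

Lemma zdeg_ge_mull m u x : zdeg_ge m x -> zdeg_ge m (mul u x).
Proof.
move=> /zdeg_geP xm; apply/zdeg_geP => r lt_rm.
rewrite ffunE; apply: big1 => p _; apply: big1 => q _.
have [lt_qm|le_mq] := ltnP q.1 m; first by rewrite xm // mulr0 mul0r.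
by rewrite basis_prod_eq0 ?mulr0 // neq_ltn (leq_trans lt_rm (leq_trans le_mq (leq_addl _ _))).
Qed.

Lemma zdeg_ge_mulr m x v : zdeg_ge m x -> zdeg_ge m (mul x v).
Proof.
move=> /zdeg_geP xm; apply/zdeg_geP => r lt_rm.
rewrite ffunE; apply: big1 => p _; apply: big1 => q _.
have [lt_pm|le_mp] := ltnP p.1 m; first by rewrite xm // !mul0r.
by rewrite basis_prod_eq0 ?mulr0 // neq_ltn (leq_trans lt_rm (leq_trans le_mp (leq_addr _ _))).
Qed.

Lemma zdeg_ge_in_ideal m b x : zdeg_ge m b -> in_ideal chi b x -> zdeg_ge m x.
Proof.
move=> bm [s ->]; apply: zdeg_ge_sum => uv _.
by apply: zdeg_ge_mulr; apply: zdeg_ge_mull.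
Qed.

Lemma zlayer_mx_sum c m (I : Type) (r : seq I) (P : pred I) (F : I -> H) :
  zlayer_mx c m (\sum_(i <- r | P i) F i) = \sum_(i <- r | P i) zlayer_mx c m (F i).
Proof.
rewrite /zlayer_mx; under eq_bigr => q _ do rewrite sum_ffunE mulr_sumr scaler_suml.
exact: exchange_big.
Qed.

Lemma zlayer_mx_lt c m m' x : (m < m')%N -> zdeg_ge m' x -> zlayer_mx c m x = 0.
Proof.
move=> lt_mm' /zdeg_geP xm'; apply: big1 => q _.
have [qm|] := eqVneq (q.1 : nat) m; last by rewrite /= !mul0r scale0r.
by rewrite xm' ?qm // mulr0 scale0r.
Qed.

Lemma zlayer_mx_single c m (hm : (m < n)%N) (x : H) h :
  (forall q, x q != 0 -> q = (Ordinal hm, h)) ->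
  zlayer_mx c m x = (c h * x (Ordinal hm, h)) *: rho h.
Proof.
move=> x_supp; rewrite /zlayer_mx (bigD1 (Ordinal hm, h)) //= eqxx mul1r big1 ?addr0 //.
move=> q nq; have [->|/x_supp qE] := eqVneq (x q) 0; first by rewrite mulr0 scale0r.
by rewrite qE eqxx in nq.
Qed.

Lemma zlayer_mx_zpow c l (hl : (l < n)%N) : zlayer_mx c l (zpow l) = c 1%g *: 1%:M.
Proof.
rewrite (@zlayer_mx_single _ _ hl _ 1%g) ?ffunE /= ?eqxx ?mulr1 ?repr_mx1 // => -[a h].
rewrite ffunE /=; case: andP => [[/eqP al /eqP ->] _|]; last by rewrite mulr0n eqxx.
by congr (_, _); apply: val_inj.
Qed.

Lemma zlayer_mx_basis_prod m (hm : (m < n)%N) (p q : 'I_n * gT) :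
  zlayer m (basis_prod chi p q)
    = (((p.1 + q.1)%N == m)%:R * chi p.2 ^- q.1) *: rho (p.2 * q.2)%g.
Proof.
have [pqm|npqm] := eqVneq (p.1 + q.1)%N m.
  rewrite (@zlayer_mx_single _ _ hm _ (p.2 * q.2)%g) ?ffunE /= ?pqm ?eqxx ?mul1r //.
  move=> -[a h]; rewrite ffunE /=; case: andP => [[/eqP apq /eqP ->] _|]; last by rewrite eqxx.
  by congr (_, _); apply: val_inj; rewrite /= apq.
rewrite mul0r scale0r; apply: big1 => r _.
have [rm|] := eqVneq (r.1 : nat) m; last by rewrite /= !mul0r scale0r.
by rewrite basis_prod_eq0 ?mulr0 ?scale0r // rm eq_sym.
Qed.

Lemma zlayer_mx_kG_emb (n_gt0 : (0 < n)%N) (E : kG k gT) :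
  zlayer 0 (kG_emb n E) = kG_mx rho E.
Proof.
transitivity (\sum_(a < n) \sum_(h : gT) (((a : nat) == 0%N)%:R * kG_emb n E (a, h)) *: rho h).
  by rewrite pair_bigA; apply: eq_bigr => -[a h] _; rewrite mulr1.
rewrite (bigD1 (Ordinal n_gt0)) //= [X in _ + X]big1 ?addr0 => [|a na].
  by apply: eq_bigr => h _; rewrite ffunE /= mul1r.
apply: big1 => h _; rewrite ffunE /=.
suff /negbTE-> : (a : nat) != 0%N by rewrite !mul0r scale0r.
by apply: contra na => /eqP a0; apply/eqP/val_inj.
Qed.

Lemma zlayer_mx_mul m (hm : (m < n)%N) u v :
  zlayer m (mul u v) =
  \sum_(p : 'I_n * gT) \sum_(q : 'I_n * gT)
    (u p * v q * (((p.1 + q.1)%N == m)%:R * chi p.2 ^- q.1)) *: rho (p.2 * q.2)%g.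
Proof.
rewrite /zlayer_mx; under eq_bigr => r _ do rewrite mulr1 ffunE mulr_sumr scaler_suml.
rewrite exchange_big; apply: eq_bigr => p _.
under eq_bigr => r _ do rewrite mulr_sumr scaler_suml.
rewrite exchange_big; apply: eq_bigr => q _.
rewrite -scalerA -(zlayer_mx_basis_prod hm) scaler_sumr; apply: eq_bigr => r _.
by rewrite mulr1 scalerA mulrCA.
Qed.

Lemma zlayer_mx_mull m (hm : (m < n)%N) u x : zdeg_ge m x ->
  zlayer m (mul u x)
    = zlayer_mx (fun s => chi s ^- m) 0 u *m zlayer m x.
Proof.
move=> /zdeg_geP xm; rewrite zlayer_mx_mul // mulmx_suml; apply: eq_bigr => p _.
rewrite mulmx_sumr; apply: eq_bigr => q _.
rewrite -scalemxAl -scalemxAr scalerA -repr_mxM ?in_setT //; congr (_ *: _).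
have [lt_qm|le_mq] := ltnP q.1 m; first by rewrite xm // !(mulr0, mul0r).
have [qm|nqm] := eqVneq (q.1 : nat) m.
  by rewrite qm -{2}[m]add0n eqn_add2r /= mulr1n; ring.
have -> : ((p.1 + q.1)%N == m) = false by apply/negbTE; lia.
by rewrite !mulr0n !(mulr0, mul0r).
Qed.

Lemma zlayer_mx_mulr m (hm : (m < n)%N) x v : zdeg_ge m x ->
  zlayer m (mul x v)
    = zlayer m x *m zlayer 0 v.
Proof.
move=> /zdeg_geP xm; rewrite zlayer_mx_mul // mulmx_suml; apply: eq_bigr => p _.
rewrite mulmx_sumr; apply: eq_bigr => q _.
rewrite -scalemxAl -scalemxAr scalerA -repr_mxM ?in_setT //; congr (_ *: _).
have [lt_pm|le_mp] := ltnP p.1 m; first by rewrite xm // !(mulr0, mul0r).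
have [q0|nq0] := eqVneq (q.1 : nat) 0%N.
  by rewrite q0 addn0 expr0 invr1 /= mulr1n; ring.
have -> : ((p.1 + q.1)%N == m) = false by apply/negbTE; lia.
by rewrite !mulr0n !(mulr0, mul0r).
Qed.

Lemma zlayer_mx_in_ideal m (hm : (m < n)%N) b beta x :
  zdeg_ge m b -> zlayer m b = beta *: 1%:M -> in_ideal chi b x ->
  exists M, zlayer m x = beta *: M.
Proof.
move=> bm b_layer [s ->].
exists (\sum_(uv <- s) zlayer_mx (fun h => chi h ^- m) 0 uv.1 *m zlayer 0 uv.2).
rewrite zlayer_mx_sum scaler_sumr; apply: eq_bigr => uv _.
rewrite zlayer_mx_mulr ?zlayer_mx_mull //; last exact: zdeg_ge_mull.
by rewrite b_layer -scalemxAr mulmx1 -scalemxAl.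
Qed.

Lemma zlayer_mx_ideal_sub (chi1 : chi 1%g = 1) (d_gt0 : (0 < d)%N) A B mA mB a b :
  (mA < n)%N -> (mB < n)%N -> zdeg_ge mA A -> zdeg_ge mB B ->
  zlayer mA A = a *: 1%:M -> zlayer mB B = b *: 1%:M ->
  (forall x, in_ideal chi A x -> in_ideal chi B x) -> a != 0 ->
  (mB <= mA)%N /\ (mA = mB -> b != 0).
Proof.
move=> ltAn ltBn Am Bm A_layer B_layer subAB a_neq0.
pose x := mul (mul (zpow 0) A) (zpow 0).
have Bx : in_ideal chi B x by apply: subAB; exists [:: (zpow 0, zpow 0)]; rewrite big_seq1.
have x_layer : zlayer mA x = a *: 1%:M.
  have n_gt0 : (0 < n)%N by apply: leq_ltn_trans ltAn.
  rewrite zlayer_mx_mulr ?zlayer_mx_mull ?zlayer_mx_zpow ?A_layer //; last exact: zdeg_ge_mull.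
  by rewrite chi1 expr1n invr1 !scale1r mul1mx mulmx1.
split.
  rewrite leqNgt; apply: contra a_neq0 => ltAB; apply/eqP; apply: (scalemx1_eq0 d_gt0).
  by rewrite -x_layer (zlayer_mx_lt _ ltAB (zdeg_ge_in_ideal Bm Bx)).
move=> eqAB; apply: contra_neq a_neq0 => b0; apply: (scalemx1_eq0 d_gt0).
have [M] := zlayer_mx_in_ideal ltBn Bm B_layer Bx.
by rewrite -eqAB x_layer b0 scale0r.
Qed.

Section ZSum.
Variables (p : nat) (e : 'I_p -> kG k gT) (t : nat) (l : nat -> nat).
Variable alpha : nat -> 'I_p -> k.
Hypotheses (t_gt0 : (0 < t)%N) (l1_lt : (l 1 < n)%N).
Hypothesis l_decr : forall j, (1 <= j < t)%N -> (l j.+1 < l j)%N.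

Lemma zdeg_ge_zsum : zdeg_ge (l t) (@zsum k gT n chi p e t l alpha).
Proof.
rewrite /zsum big_nat_cond; apply: zdeg_ge_sum => j /andP[/andP[j_ge1 j_lt] _].
have /(decreasing_bounds l1_lt l_decr)[le_tj _] : (1 <= j <= t)%N by rewrite j_ge1.
by apply/zdeg_ge_mulr/(zdeg_geW le_tj (zdeg_ge_zpow _)).
Qed.

Lemma zlayer_mx_zsum :
  zlayer (l t) (@zsum k gT n chi p e t l alpha)
    = \sum_(i < p) alpha t i *: kG_mx rho (e i).
Proof.
have /(decreasing_bounds l1_lt l_decr)[_ lt_ltn] : (1 <= t <= t)%N by rewrite t_gt0 leqnn.
rewrite zlayer_mx_sum big_nat_recr //= big_nat_cond big1 ?add0r; last first.
  move=> j /andP[/andP[j_ge1 j_lt] _]; apply: zlayer_mx_lt (zdeg_ge_mulr _ (zdeg_ge_zpow _)).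
  by apply: (decreasing_ltn l_decr j_ge1); rewrite j_lt leqnn.
rewrite zlayer_mx_mulr ?zdeg_ge_zpow // zlayer_mx_zpow // scale1r mul1mx.
by rewrite zlayer_mx_kG_emb ?kG_mx_sum //; apply: leq_ltn_trans lt_ltn.
Qed.

End ZSum.

End ZLayer.

Lemma exists_neq0_of_sum (F : fieldType) p (c : 'I_p -> F) :
  \sum_(i < p) c i != 0 -> exists i, c i != 0.
Proof.
move=> sum_neq0; apply/existsP; apply: contraNT sum_neq0 => /existsPn c0.
by apply/eqP/big1 => i _; apply/eqP/negbNE/c0.
Qed.

Section LeadingTerm.
Variables (k : closedFieldType) (gT : finGroupType) (chi : gT -> k) (n : nat).
Hypotheses (k_char0 : [pchar k] =i pred0) (chi1 : chi 1%g = 1).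
Variables (p : nat) (chi_ : 'I_p -> gT -> k).
Hypothesis chi_irr : irr_enum chi_.
Local Notation zsumE := (@zsum k gT n chi p (fun i => cidem (chi_ i))).
Local Notation sG := (DecSocleType (regular_repr k [set: gT]%G)).

Lemma zlayer_mx_zsum_cidem i (W : sG) t l alpha :
  (forall x, chi_ i x = \tr (irr_repr W x)) ->
  (0 < t)%N -> (l 1 < n)%N -> (forall j, (1 <= j < t)%N -> (l j.+1 < l j)%N) ->
  zlayer_mx (irr_repr W) (fun _ => 1) (l t) (zsumE t l alpha) = alpha t i *: 1%:M.
Proof.
move=> chi_iE t_gt0 l1_lt l_decr; rewrite zlayer_mx_zsum //.
under eq_bigr => j _ do rewrite (kG_mx_cidem_enum k_char0 chi_irr chi_iE).
rewrite (bigD1 i) //= eqxx scale1r big1 ?addr0 // => j /negbTE->.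
by rewrite scale0r scaler0.
Qed.

Lemma zsum_ideal_sub t r l m alpha beta :
  (0 < t)%N -> (0 < r)%N -> (l 1 < n)%N -> (m 1 < n)%N ->
  (forall j, (1 <= j < t)%N -> (l j.+1 < l j)%N) ->
  (forall s, (1 <= s < r)%N -> (m s.+1 < m s)%N) ->
  (forall x, in_ideal chi (zsumE t l alpha) x -> in_ideal chi (zsumE r m beta) x) ->
  forall i, alpha t i != 0 -> (m r <= l t)%N /\ (l t = m r -> beta r i != 0).
Proof.
move=> t_gt0 r_gt0 l1_lt m1_lt l_decr m_decr subAB i.
have [W chi_iE] := irr_enum_socle k_char0 chi_irr i.
have /(decreasing_bounds l1_lt l_decr)[_ lt_tn] : (1 <= t <= t)%N by rewrite t_gt0 leqnn.
have /(decreasing_bounds m1_lt m_decr)[_ lt_rn] : (1 <= r <= r)%N by rewrite r_gt0 leqnn.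
apply: (zlayer_mx_ideal_sub chi1 (irr_degree_gt0 W) lt_tn lt_rn) subAB.
- exact: zdeg_ge_zsum.
- exact: zdeg_ge_zsum.
- exact: zlayer_mx_zsum_cidem.
- exact: zlayer_mx_zsum_cidem.
Qed.

End LeadingTerm.

Theorem corollary3p6
  (k : closedFieldType) (k_char0 : [pchar k] =i pred0)
  (gT : finGroupType)
  (chi : gT -> k)
  (chi_mul : forall x y : gT, chi (x * y)%g = chi x * chi y)
  (chi_unit : forall x : gT, chi x != 0)
  (g : gT) (g_central : g \in ('Z([set: gT]))%g)
  (n : nat) (n_ge2 : (2 <= n)%N) (n_order : n.-primitive_root (chi g))
  (p : nat) (chi_ : 'I_p -> gT -> k) (chi_irr : irr_enum chi_)
  (t r : nat) (l m : nat -> nat)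
  (alpha beta : nat -> 'I_p -> k)
  (t_pos : (0 < t)%N) (r_pos : (0 < r)%N)
  (l1_lt : (l 1 < n)%N)
  (l_decr : forall j, (1 <= j < t)%N -> (l j.+1 < l j)%N)
  (m1_lt : (m 1 < n)%N)
  (m_decr : forall s, (1 <= s < r)%N -> (m s.+1 < m s)%N)
  (alpha01 : forall j i, (1 <= j <= t)%N -> (alpha j i == 0) || (alpha j i == 1))
  (beta01 : forall s i, (1 <= s <= r)%N -> (beta s i == 0) || (beta s i == 1))
  (alpha_t_nz : \sum_(i < p) alpha t i != 0)
  (beta_r_nz : \sum_(i < p) beta r i != 0)
  (heq : @same_ideal k gT n chi
           (@zsum k gT n chi p (fun i => cidem (chi_ i)) t l alpha)
           (@zsum k gT n chi p (fun i => cidem (chi_ i)) r m beta)) :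
  l t = m r /\ forall i : 'I_p, alpha t i = beta r i.
Proof.
have chi1 : chi 1%g = 1.
  by apply: (mulIf (chi_unit 1%g)); rewrite -chi_mul mulg1 mul1r.
have subAB := zsum_ideal_sub k_char0 chi1 chi_irr t_pos r_pos l1_lt m1_lt l_decr m_decr
  (fun x => (heq x).1).
have subBA := zsum_ideal_sub k_char0 chi1 chi_irr r_pos t_pos m1_lt l1_lt m_decr l_decr
  (fun x => (heq x).2).
have [_ /subAB[le_mr_lt _]] := exists_neq0_of_sum alpha_t_nz.
have [_ /subBA[le_lt_mr _]] := exists_neq0_of_sum beta_r_nz.
have eq_lt_mr : l t = m r by apply/eqP; rewrite eqn_leq le_lt_mr le_mr_lt.
split=> // i.
have t_range : (1 <= t <= t)%N by rewrite t_pos leqnn.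
have r_range : (1 <= r <= r)%N by rewrite r_pos leqnn.
case/orP: (alpha01 t i t_range) => /eqP ai; case/orP: (beta01 r i r_range) => /eqP bi.
- by rewrite ai bi.
- have /subBA[_ /(_ (esym eq_lt_mr))] : beta r i != 0 by rewrite bi oner_eq0.
  by rewrite ai eqxx.
- have /subAB[_ /(_ eq_lt_mr)] : alpha t i != 0 by rewrite ai oner_eq0.
  by rewrite bi eqxx.
- by rewrite ai bi.
Qed.
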